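(* Let $W\in\mathbb{R}^{d\times d}$ be symmetric positive definite, $b\in\mathbb{R}^d$, $c\in\mathbb{R}$, and consider $\min_{x\in\mathbb{R}^d} f(x)=\frac12 x^TWx-b^Tx+c$, with unique solution $x^\star=W^{-1}b$. Let $W=Q\Lambda Q^T$ be an eigendecomposition with $Q$ orthogonal and $\Lambda$ diagonal. Consider an optimization method of the form $$x_{k+1}-x^\star = Q A Q^T (x_k-x^\star) + Q B Q^T (x_{k-1}-x^\star),\qquad k\ge 1,$$ started from arbitrary $x_0,x_1\in\mathbb{R}^d$, where $A=\mathrm{diag}(a_1,\dots,a_d)$ and $B=\mathrm{diag}(b_1,\dots,b_d)$ are real diagonal matrices (equivalently, in the coordinates $\hat x_k=Q^T(x_k-x^\star)$ the method reads $\hat x_{k+1}=A\hat x_k+B\hat x_{k-1}$, i.e. $z_{k+1}=Mz_k$ with $M=\begin{bmatrix}A & B\\ I & 0\end{bmatrix}$, $z_k=(\hat x_k,\hat x_{k-1})$). Assume the method converges to $x^\star$, and that for each $i\in\{1,\dots,d\}$ the two eigenvalues $\lambda_1^{M_i},\lambda_2^{M_i}$ of the $2\times 2$ matrix $M_i=\begin{bmatrix} a_i & b_i\\ 1 & 0\end{bmatrix}$ form a conjugate pair, i.e. $(\lambda_1^{M_i})^*=\lambda_2^{M_i}$. Then $$V(x_k,x_{k-1},x_{k-2})=\|x_{k-1}-x^\star\|^2-\langle x_k-x^\star,\,x_{k-2}-x^\star\rangle$$ is a Lyapunov function for this method.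
   Context: The method is said to converge to $x^\star$ if $x_k\to x^\star$ for every choice of initial points $x_0,x_1$. A function $V(x_k,x_{k-1},x_{k-2})$ is called a Lyapunov function for the method if, along every trajectory of the method, $V(x_k,x_{k-1},x_{k-2})\ge 0$ for all $k\ge 2$ and $V(x_{k+1},x_k,x_{k-1})\le V(x_k,x_{k-1},x_{k-2})$ for all $k\ge 2$. ''Conjugate pair'' means the two eigenvalues are complex conjugates of each other (this includes the case of two equal real eigenvalues). Here $\|\cdot\|$ and $\langle\cdot,\cdot\rangle$ are the Euclidean norm and inner product. *)

From mathcomp Require Import all_boot all_order all_algebra.
From mathcomp Require Import all_classical all_reals all_analysis.
From mathcomp Require Import complex.
Import Order.TTheory GRing.Theory Num.Theory.
Import numFieldTopology.Exports numFieldNormedType.Exports.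

Set Implicit Arguments.
Unset Strict Implicit.
Unset Printing Implicit Defensive.

Local Open Scope classical_set_scope.
Local Open Scope ring_scope.

Definition inner (R : realType) (d : nat) (u v : 'cV[R]_d) : R :=
  \sum_(i < d) u i 0 * v i 0.
Definition norm2 (R : realType) (d : nat) (u : 'cV[R]_d) : R := inner u u.

Definition spd (R : realType) (d : nat) (W : 'M[R]_d) : Prop :=
  W^T = W /\ forall v : 'cV[R]_d, v != 0 -> 0 < inner v (W *m v).

Definition orthogonal_mx (R : realType) (d : nat) (Q : 'M[R]_d) : Prop :=
  Q^T *m Q = 1%:M.

Definition M2 (R : realType) (ai bi : R) : 'M[R]_2 :=
  \matrix_(i < 2, j < 2)
    (if i == 0 then (if j == 0 then ai else bi) else (if j == 0 then 1 else 0)).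

Definition eigenvalues2 (R : realType) (M : 'M[R]_2) (l1 l2 : R[i]) : Prop :=
  char_poly (map_mx (fun r : R => (r%:C)%C) M) = ('X - l1%:P) * ('X - l2%:P).

Definition eig_conjugate_pair (R : realType) (M : 'M[R]_2) : Prop :=
  exists l1 l2 : R[i], eigenvalues2 M l1 l2 /\ (l1^*)%C = l2.

Definition trajectory (R : realType) (d : nat) (Q : 'M[R]_d) (a bb : 'rV[R]_d)
    (xs : 'cV[R]_d) (x : nat -> 'cV[R]_d) : Prop :=
  forall k : nat, (1 <= k)%N ->
    x k.+1 - xs = Q *m diag_mx a *m Q^T *m (x k - xs)
                  + Q *m diag_mx bb *m Q^T *m (x k.-1 - xs).

Definition method_converges (R : realType) (d : nat) (Q : 'M[R]_d)
    (a bb : 'rV[R]_d) (xs : 'cV[R]_d) : Prop :=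
  forall x : nat -> 'cV[R]_d, trajectory Q a bb xs x ->
    x k @[k --> \oo] --> xs.

Definition is_lyapunov (R : realType) (d : nat) (Q : 'M[R]_d)
    (a bb : 'rV[R]_d) (xs : 'cV[R]_d)
    (V : 'cV[R]_d -> 'cV[R]_d -> 'cV[R]_d -> R) : Prop :=
  forall x : nat -> 'cV[R]_d, trajectory Q a bb xs x ->
    (forall k : nat, (2 <= k)%N -> 0 <= V (x k) (x k.-1) (x k.-2)) /\
    (forall k : nat, (2 <= k)%N ->
       V (x k.+1) (x k) (x k.-1) <= V (x k) (x k.-1) (x k.-2)).

Definition Vfun (R : realType) (d : nat) (xs : 'cV[R]_d)
    (u v w : 'cV[R]_d) : R :=
  norm2 (v - xs) - inner (u - xs) (w - xs).

Definition fobj (R : realType) (d : nat) (W : 'M[R]_d) (b : 'cV[R]_d) (c : R)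
    (x : 'cV[R]_d) : R :=
  2^-1 * inner x (W *m x) - inner b x + c.

From mathcomp Require Import all_boot all_order all_algebra.
From mathcomp Require Import all_classical all_reals all_analysis.
From mathcomp Require Import complex.
From mathcomp Require Import ring lra.
Import Order.TTheory GRing.Theory Num.Theory.
Import numFieldTopology.Exports numFieldNormedType.Exports.

Set Implicit Arguments.
Unset Strict Implicit.
Unset Printing Implicit Defensive.

Local Open Scope classical_set_scope.
Local Open Scope ring_scope.

(* In the coordinates y_k = Q^T (x_k - x_star) the method decouples into scalar
   recurrences y_(k+2) = a_i y_(k+1) + b_i y_k, and V(x_(k+2), x_(k+1), x_k) is
   the sum over i of the Casoratians y_(k+1)^2 - y_(k+2) y_k, each of which is
   multiplied by -b_i at every step.  Complex conjugate eigenvalues of M_i mean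
   a_i^2 + 4 b_i <= 0, which makes the Casoratian a nonnegative quadratic form
   in (y_(k+1), y_k) and forces b_i <= 0.  Convergence forces b_i >= -1: along
   the i-th eigenvector, the trajectory started from y_0 = 0, y_1 = 1 has
   Casoratian (-b_i)^k, which has to tend to 0.  So 0 <= -b_i <= 1, and every
   Casoratian is nonnegative and nonincreasing. *)

Section M2.
Variables (R : realType) (a b : R).

Lemma mxtrace_M2 : \tr (M2 a b) = a.
Proof. by rewrite /mxtrace !big_ord_recl big_ord0 !mxE /= !addr0. Qed.

Lemma det_M2 : \det (M2 a b) = - b.
Proof.
rewrite (expand_det_row _ 0) !big_ord_recl big_ord0 /cofactor !det_mx11 !mxE /=.
by rewrite /bump /=; ring.
Qed.

Lemma eigenvalues2_M2 (l1 l2 : R[i]) : eigenvalues2 (M2 a b) l1 l2 ->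
  l1 + l2 = (a%:C)%C /\ l1 * l2 = (- b)%:C%C.
Proof.
rewrite /eigenvalues2 => E.
have := char_poly_trace (map_mx (real_complex R) (M2 a b)) (isT : (0 < 2)%N).
have := char_poly_det (map_mx (real_complex R) (M2 a b)).
rewrite E trace_map_mx det_map_mx mxtrace_M2 det_M2.
rewrite !coefM !big_ord_recl big_ord0 /= !coefB !coefX !coefC /= big_ord0.
rewrite !sub0r !subr0 !addr0 mulrNN mul1r mulr1 sqrrN expr1n mul1r -opprD.
by move=> -> /oppr_inj.
Qed.

Lemma conjugate_pair_discr_le0 :
  eig_conjugate_pair (M2 a b) -> a ^+ 2 + 4 * b <= 0.
Proof.
case=> l1 [l2 [/eigenvalues2_M2 [sum prod] conj]].
move: sum prod; rewrite -{l2}conj; case: l1 => x y /eqP + /eqP.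
rewrite !eq_complex /= => /andP[/eqP <- _] /andP[/eqP sq _].
rewrite -[b]opprK -sq.
have -> : (x + x) ^+ 2 + 4 * - (x * x - y * - y) = - (2 * y) ^+ 2 by ring.
by rewrite oppr_le0 sqr_ge0.
Qed.

End M2.

Lemma cvg_scaler0 (K : numFieldType) (V : normedModType K) (T : Type)
    (F : set_system T) {FF : Filter F} (s : T -> K) (v : V) :
  v != 0 -> s t *: v @[t --> F] --> 0 -> s t @[t --> F] --> 0.
Proof.
move=> v0 /cvg_norm; rewrite normr0 => sv0; apply: norm_cvg0.
have -> : (fun t => `|s t|) = (fun t => `|s t *: v| * `|v|^-1).
  by apply/funext => t; rewrite normrZ mulfK // normr_eq0.
by rewrite -(mul0r `|v|^-1); exact: cvgMr_tmp.
Qed.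

Definition recurrence2 (R : pzSemiRingType) (a b : R) (u : nat -> R) : Prop :=
  forall n, u n.+2 = a * u n.+1 + b * u n.

Definition casoratian (R : pzRingType) (u : nat -> R) (n : nat) : R :=
  u n.+1 ^+ 2 - u n.+2 * u n.

Section Casoratian.
Variables (R : realDomainType) (a b : R) (u : nat -> R).
Hypothesis u_rec : recurrence2 a b u.

Lemma casoratianS n : casoratian u n.+1 = - b * casoratian u n.
Proof. rewrite /casoratian !u_rec; ring. Qed.

Hypothesis disc_le0 : a ^+ 2 + 4 * b <= 0.

Lemma casoratian_ge0 n : 0 <= casoratian u n.
Proof.
rewrite /casoratian u_rec.
(* 4 * casoratian u n is this difference, by completing the square. *)
have : 0 <= (2 * u n.+1 - a * u n) ^+ 2 - (a ^+ 2 + 4 * b) * u n ^+ 2.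
  by rewrite subr_ge0 (le_trans (mulr_le0_ge0 disc_le0 (sqr_ge0 _))) ?sqr_ge0.
nra.
Qed.

Lemma casoratianS_le (b_ge : -1 <= b) n : casoratian u n.+1 <= casoratian u n.
Proof.
rewrite casoratianS; have := casoratian_ge0 n; have := sqr_ge0 a; nra.
Qed.

End Casoratian.

Fixpoint lucasU (R : pzSemiRingType) (a b : R) (n : nat) : R :=
  match n with
  | 0 => 0
  | 1 => 1
  | (m.+1 as n').+1 => a * lucasU a b n' + b * lucasU a b m
  end.

Lemma lucasU_recurrence (R : pzSemiRingType) (a b : R) :
  recurrence2 a b (lucasU a b).
Proof. by []. Qed.

Lemma casoratian_lucasU (R : realDomainType) (a b : R) n :
  casoratian (lucasU a b) n = (- b) ^+ n.
Proof.
elim: n => [|n IH]; first by rewrite /casoratian /= mulr0 subr0 expr1n.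
by rewrite (casoratianS (lucasU_recurrence a b)) IH exprS.
Qed.

Lemma casoratian_cvg0 (R : realFieldType) (u : nat -> R) :
  u n @[n --> \oo] --> 0 -> casoratian u n @[n --> \oo] --> 0.
Proof.
move=> u0.
have u0S : u n.+1 @[n --> \oo] --> 0 by rewrite (cvg_shiftS u).
have u0SS : u n.+2 @[n --> \oo] --> 0 by rewrite (cvg_shiftS (fun n => u n.+1)).
rewrite -[X in _ --> X](subr0 0) -[X in _ --> X - _](mulr0 0).
rewrite -[X in _ --> _ - X](mulr0 0).
exact: cvgB (cvgM u0S u0S) (cvgM u0SS u0).
Qed.

Lemma lucasU_cvg0_ge (R : realFieldType) (a b : R) :
  lucasU a b n @[n --> \oo] --> 0 -> -1 <= b.
Proof.
move=> /casoratian_cvg0 C0; rewrite leNgt; apply/negP => bN1.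
have : 1 <= lim (casoratian (lucasU a b) n @[n --> \oo]).
  apply: limr_ge; first by apply/cvg_ex; exists 0.
  by near=> n; rewrite casoratian_lucasU exprn_ege1 // lerNr ltW.
by rewrite (cvg_lim _ C0) // ler10.
Unshelve. all: by end_near.
Qed.

Section OrthogonalCoordinates.
Variables (R : realType) (d : nat) (Q : 'M[R]_d).
Hypothesis Q_orth : orthogonal_mx Q.

Lemma inner_tr_orthogonal (u v : 'cV[R]_d) :
  inner (Q^T *m u) (Q^T *m v) = inner u v.
Proof.
have innerE (w z : 'cV[R]_d) : inner w z = (w^T *m z) 0 0.
  by rewrite mxE; apply: eq_bigr => i _; rewrite mxE.
rewrite !innerE trmx_mul trmxK -mulmxA (mulmxA Q) (mulmx1C Q_orth).
by rewrite mul1mx.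
Qed.

Variables (a bb : 'rV[R]_d) (xs : 'cV[R]_d).

Lemma trajectory_recurrence (x : nat -> 'cV[R]_d) :
  trajectory Q a bb xs x -> forall i,
  recurrence2 (a 0 i) (bb 0 i) (fun k => (Q^T *m (x k - xs)) i 0).
Proof.
move=> x_traj i n /=.
rewrite x_traj // mulmxDr !mulmxA Q_orth !mul1mx -!mulmxA.
by rewrite mxE !mul_diag_mx !mxE.
Qed.

Lemma Vfun_casoratian (x : nat -> 'cV[R]_d) n :
  Vfun xs (x n.+2) (x n.+1) (x n) =
  \sum_i casoratian (fun k => (Q^T *m (x k - xs)) i 0) n.
Proof.
rewrite /Vfun /norm2 -(inner_tr_orthogonal (x n.+1 - xs)).
rewrite -(inner_tr_orthogonal (x n.+2 - xs)) /inner -sumrB.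
by apply: eq_bigr => i _; rewrite /casoratian expr2.
Qed.

Lemma trajectory_eigendirection i (u : nat -> R) :
  recurrence2 (a 0 i) (bb 0 i) u ->
  trajectory Q a bb xs (fun k => xs + u k *: (Q *m delta_mx i 0)).
Proof.
have diag_delta (c : 'rV[R]_d) :
    diag_mx c *m delta_mx i 0 = c 0 i *: delta_mx i 0.
  apply/matrixP => r s; rewrite mul_diag_mx !mxE.
  by case: eqP => [->|_]; rewrite ?mulr0 ?mulr1.
have shiftE k :
    xs + u k *: (Q *m delta_mx i 0) - xs = u k *: (Q *m delta_mx i 0).
  by rewrite addrC addKr.
move=> u_rec [//|k] _ /=.
rewrite !shiftE -!scalemxAr -!mulmxA (mulmxA Q^T) Q_orth mul1mx.
rewrite !diag_delta -!scalemxAr !scalerA -scalerDl u_rec.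
by rewrite [a 0 i * _]mulrC [bb 0 i * _]mulrC.
Qed.

Lemma method_converges_bb_ge :
  method_converges Q a bb xs -> forall i, -1 <= bb 0 i.
Proof.
move=> conv i; pose e : 'cV[R]_d := delta_mx i 0.
have Qe_neq0 : Q *m e != 0.
  apply/negP => /eqP Qe0.
  have : (Q^T *m (Q *m e)) i 0 = 1 by rewrite mulmxA Q_orth mul1mx mxE !eqxx.
  by rewrite Qe0 mulmx0 mxE => /eqP; rewrite eq_sym oner_eq0.
apply: (@lucasU_cvg0_ge _ (a 0 i)); apply: (cvg_scaler0 Qe_neq0).
have := conv _ (trajectory_eigendirection (lucasU_recurrence (a 0 i) (bb 0 i))).
set u := lucasU _ _; move/subr_cvg0.
rewrite (@eq_cvg _ _ _ _ (fun k => u k *: (Q *m e))) //.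
by move=> k; rewrite addrC addKr.
Qed.

End OrthogonalCoordinates.

Theorem theorem2 (R : realType) (d : nat) (W : 'M[R]_d) (b : 'cV[R]_d) (c : R)
    (Q Lam : 'M[R]_d) (a bb : 'rV[R]_d) :
  spd W ->
  orthogonal_mx Q -> is_diag_mx Lam -> W = Q *m Lam *m Q^T ->
  let xs := invmx W *m b in
  method_converges Q a bb xs ->
  (forall i : 'I_d, eig_conjugate_pair (M2 (a 0 i) (bb 0 i))) ->
  is_lyapunov Q a bb xs (Vfun xs).
Proof.
move=> _ Q_orth _ _ xs conv conj x x_traj.
have disc i := conjugate_pair_discr_le0 (conj i).
have bb_ge := method_converges_bb_ge Q_orth conv.
have y_rec := trajectory_recurrence Q_orth x_traj.
split=> -[|[|n]] // _ /=; rewrite !(Vfun_casoratian Q_orth).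
- apply: sumr_ge0 => i _; exact: casoratian_ge0 (y_rec i) (disc i) n.
- apply: ler_sum => i _; exact: casoratianS_le (y_rec i) (disc i) (bb_ge i) n.
Qed.
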